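(* Let $n\ge 3$ and $\varphi$ a linear functional with $\varphi(e_i)=a_i$, $0<a_1<\dots<a_n$. Every $\varphi$-monotone path on $\diamond^n$ is at distance at most $n-2$ in the flip graph from some coherent monotone path, and this bound is attained (e.g. by the path with vertices $-e_n,-e_{n-1},\dots,-e_1,e_2,\dots,e_{n-1},e_n$).
   Context: $\diamond^n=\mathrm{conv}\{\pm e_1,\dots,\pm e_n\}$. A monotone path is a sequence of vertices $-e_n=v_0,\dots,v_m=e_n$ with $v_{j-1}\neq -v_j$ and $\varphi(v_{j-1})<\varphi(v_j)$. The flip graph has the monotone paths as vertices, two being adjacent when one is obtained from the other by inserting or deleting a single vertex. A monotone path is coherent if there is a linear functional $\psi$ such that for $\pi=(\varphi,\psi):\mathbb{R}^n\to\mathbb{R}^2$ the images $\pi(v_0),\dots,\pi(v_m)$ are exactly the lower vertices of the polygon $\pi(\diamond^n)$ in order and each edge $[v_{j-1},v_j]$ is the preimage in $\diamond^n$ of a lower edge; for $\diamond^n$ this holds exactly when the path contains no antipodal pair other than $\{-e_n,e_n\}$. *)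

From mathcomp Require Import all_boot all_order all_algebra.
From mathcomp Require Export reals.
Set Implicit Arguments. Unset Strict Implicit. Unset Printing Implicit Defensive.
Import Order.TTheory GRing.Theory Num.Theory.
Local Open Scope ring_scope.

(* A vertex of the cross-polytope diamond^n: (true, i) is e_i, (false, i) is -e_i,
   with 1-based indices 1 <= i <= n. *)
Definition vert := (bool * nat)%type.

Definition valid (n : nat) (v : vert) : bool := (1 <= v.2 <= n)%N.

Definition lin {R : realType} (c : nat -> R) (v : vert) : R :=
  if v.1 then c v.2 else - c v.2.

Definition antipodal (v w : vert) : bool := (v.2 == w.2) && (v.1 != w.1).

Definition mono_step {R : realType} (a : nat -> R) (v w : vert) : bool :=
  ~~ antipodal v w && (lin a v < lin a w).

Definition monotone_path {R : realType} (n : nat) (a : nat -> R) (p : seq vert) : Prop :=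
  exists rest, p = (false, n) :: rest /\ last (false, n) rest = (true, n) /\
    all (valid n) p /\ path (mono_step a) (false, n) rest.

Definition flip_adj (p q : seq vert) : Prop :=
  exists s1 s2 x, (p = s1 ++ s2 /\ q = s1 ++ x :: s2) \/
                  (p = s1 ++ x :: s2 /\ q = s1 ++ s2).

Fixpoint flip_within {R : realType} (n : nat) (a : nat -> R) (k : nat) (p q : seq vert) : Prop :=
  match k with
  | 0 => p = q
  | k'.+1 => flip_within n a k' p q \/
       exists r, monotone_path n a r /\ flip_adj p r /\ flip_within n a k' r q
  end.

(* [v,w] is the preimage in diamond^n of a lower edge of pi(diamond^n),
   pi = (phi, psi): the face of diamond^n minimizing psi + c*phi has vertex set {v,w}. *)
Definition lower_edge_preimage {R : realType} (n : nat) (a psi : nat -> R) (c : R)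
  (v w : vert) : Prop :=
  let f := fun u => lin psi u + c * lin a u in
  f v = f w /\ forall u, valid n u -> f v <= f u /\ (f u <= f v -> u = v \/ u = w).

Definition coherent {R : realType} (n : nat) (a : nat -> R) (p : seq vert) : Prop :=
  exists psi : nat -> R, forall j, (j.+1 < size p)%N ->
    exists c : R, lower_edge_preimage n a psi c (nth (false, 0%N) p j) (nth (false, 0%N) p j.+1).

Definition extremal_path (n : nat) : seq vert :=
  [seq (false, (n - i)%N) | i <- iota 0 n] ++ [seq (true, i) | i <- iota 2 (n - 1)].

(* Vertices are +-e_i, phi(e_i) = a_i with 0 < a_1 < ... < a_n, and for a path
   p let pair_count p be the number of indices 2 <= i <= n-1 such that p visits
   both e_i and -e_i.  The proof rests on four facts about monotone paths:
   - e_1 and -e_1 are never both visited (no_pair_at_one);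
   - a path visiting no antipodal pair besides {-e_n, e_n} is coherent: lifting
     +-e_i on the path to height +-(a_i^2 - a_n^2) puts the path on the
     parabola x |-> x^2 - a_n^2, above which all other vertices lie
     (coherent_of_no_pairs), and conversely coherent paths visit no such pair
     (coherent_no_pairs), i.e. have pair_count 0;
   - deleting -e_i from a path visiting both +-e_i (i < n) is a flip to a
     monotone path (delete_neg_mono);
   - a flip changes pair_count by at most one (pair_count_flip).
   Deleting -e_i for i = 2, ..., n-1 gives the upper bound n - 2; the extremal
   path -e_n, ..., -e_1, e_2, ..., e_n has pair_count n - 2, giving the lower
   bound. *)

From mathcomp Require Import all_boot all_order all_algebra.
From mathcomp Require Import reals ring lra zify.
Import Order.TTheory GRing.Theory Num.Theory.
Local Open Scope ring_scope.
Set Implicit Arguments. Unset Strict Implicit. Unset Printing Implicit Defensive.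

Lemma split_first (T : eqType) (x : T) (s : seq T) :
  x \in s -> exists s1 s2, s = s1 ++ x :: s2 /\ x \notin s1.
Proof.
elim: s => [|y s IH] //; rewrite inE.
have [->|ne] := eqVneq x y => /= H; first by exists [::], s.
have [s1 [s2 [-> ns1]]] := IH H.
by exists (y :: s1), s2; rewrite inE negb_or ne.
Qed.

Lemma rem_split (T : eqType) (x : T) (s1 s2 : seq T) :
  x \notin s1 -> rem x (s1 ++ x :: s2) = s1 ++ s2.
Proof.
elim: s1 => [|y s1 IH] /=; first by rewrite eqxx.
by rewrite inE negb_or => /andP[ne ns]; rewrite eq_sym (negbTE ne) IH.
Qed.

Lemma flip_rem (p : seq vert) (x : vert) : x \in p -> flip_adj p (rem x p).
Proof.
move=> /split_first [s1 [s2 [-> ns]]]; rewrite rem_split //.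
by exists s1, s2, x; right.
Qed.

Lemma path_map_iota (T : Type) (e : rel T) (f : nat -> T) (k : nat) :
  forall x m, ((0 < k)%N -> e x (f m)) ->
  (forall i, (m <= i)%N -> (i.+1 < m + k)%N -> e (f i) (f i.+1)) ->
  path e x (map f (iota m k)).
Proof.
elim: k => [|k IH] x m H0 Hs //=.
rewrite H0 //=; apply: IH => [k0|i mi ik]; apply: Hs; lia.
Qed.

Lemma last_map_iota (T : Type) (f : nat -> T) (k : nat) :
  forall x m, last x (map f (iota m k.+1)) = f (m + k)%N.
Proof.
elim: k => [|k IH] x m /=; first by rewrite addn0.
by move: (IH (f m) m.+1) => /= ->; rewrite addSnnS.
Qed.

Lemma path_drop (T : Type) (e : rel T) x s1 y w s2 :
  path e x (s1 ++ y :: w :: s2) -> e (last x s1) w -> path e x (s1 ++ w :: s2).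
Proof. by rewrite !cat_path /= => /andP[-> /and3P[_ _ ->]] ->. Qed.

Lemma quadratic_gap_pos (F : realFieldType) (A xv xw x : F) :
  -A <= xv -> xv < xw -> xw <= A -> -A < x < A -> (-A < xv \/ xw < A) ->
  0 < A ^+ 2 + xv * xw - (xv + xw) * x.
Proof.
move=> h1 h2 h3 /andP[h4 h5] h6.
have A2 : 0 < 2%:R * A by lra.
have E : 2%:R * A * (A ^+ 2 + xv * xw - (xv + xw) * x) =
   (A - x) * ((A + xv) * (A + xw)) + (A + x) * ((A - xv) * (A - xw)) by ring.
rewrite -(pmulr_rgt0 _ A2) E.
have ge0 : forall y z t : F, 0 <= y -> 0 <= z -> 0 <= t -> 0 <= y * (z * t).
  by move=> y z t y0 z0 t0; rewrite !mulr_ge0.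
have gt0 : forall y z t : F, 0 < y -> 0 < z -> 0 < t -> 0 < y * (z * t).
  by move=> y z t y0 z0 t0; rewrite !mulr_gt0.
case: h6 => h6.
  by apply: ltr_pwDl; [apply: gt0 | apply: ge0]; lra.
by apply: ltr_pwDr; [apply: gt0 | apply: ge0]; lra.
Qed.

Lemma mem_consecutive (T : eqType) (x0 z : T) (s : seq T) :
  (1 < size s)%N -> z \in s ->
  exists2 j, (j.+1 < size s)%N & z = nth x0 s j \/ z = nth x0 s j.+1.
Proof.
move=> s2 zs; have ks : (index z s < size s)%N by rewrite index_mem.
have zk : nth x0 s (index z s) = z by rewrite nth_index.
have [lt|ge] := ltnP (index z s).+1 (size s); first by exists (index z s); last left.
have k0 : (0 < index z s)%N by lia.
by exists (index z s).-1; rewrite prednK //; right.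
Qed.

Section CrossPolytope.
Variables (R : realType) (n : nat) (a : nat -> R).
Hypothesis a1_gt0 : 0 < a 1%N.
Hypothesis a_incr : forall i, (1 <= i < n)%N -> a i < a i.+1.

Lemma coef_lt i j : (1 <= i)%N -> (i < j)%N -> (j <= n)%N -> a i < a j.
Proof.
move=> i1; elim: j => [|j IH] // ij jn.
have [->|ne] := eqVneq i j; first by apply: a_incr; lia.
apply: lt_trans (IH _ _) (a_incr _); lia.
Qed.

Lemma coef_le i j : (1 <= i)%N -> (i <= j)%N -> (j <= n)%N -> a i <= a j.
Proof.
move=> i1; rewrite leq_eqVlt => /orP[/eqP -> //| ij] jn.
exact/ltW/coef_lt.
Qed.

Lemma coef_gt0 i : (1 <= i <= n)%N -> 0 < a i.
Proof. by case/andP=> i1 iN; apply: lt_le_trans a1_gt0 (coef_le _ i1 iN). Qed.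

Lemma lin_norm_bounds u : valid n u -> a 1%N <= `|lin a u| <= a n.
Proof.
case: u => [b i] /andP[/= i1 iN].
have ai : 0 < a i by apply: coef_gt0; lia.
by case: b; rewrite /lin /= ?normrN gtr0_norm ?coef_le.
Qed.

Lemma lin_lt_top u : valid n u -> u.2 != n -> `|lin a u| < a n.
Proof.
case: u => [b i] /andP[/= i1 iN] ne.
have ai : 0 < a i by apply: coef_gt0; lia.
have lt : a i < a n by apply: coef_lt; lia.
by case: b; rewrite /lin /= ?normrN gtr0_norm.
Qed.

Definition lin_lt (u v : vert) : bool := lin a u < lin a v.

Lemma lin_lt_trans : transitive lin_lt.
Proof. by move=> y x z; apply: lt_trans. Qed.

Lemma mono_valid p : monotone_path n a p -> all (valid n) p.
Proof. by case=> rest [_ [_ [V _]]]. Qed.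

Lemma mono_sorted p : monotone_path n a p -> sorted lin_lt p.
Proof. by case=> rest [-> [_ [_ P]]]; apply: sub_path P => u v /andP[]. Qed.

Lemma mono_pairwise p : monotone_path n a p -> pairwise lin_lt p.
Proof. by move/mono_sorted; rewrite sorted_pairwise //; apply: lin_lt_trans. Qed.

Lemma mono_uniq p : monotone_path n a p -> uniq p.
Proof.
move/mono_sorted; apply: sorted_uniq; first exact: lin_lt_trans.
by move=> u; rewrite /lin_lt ltxx.
Qed.

Lemma mono_nth_lt p x0 i j : monotone_path n a p ->
  (i < j)%N -> (j < size p)%N -> lin a (nth x0 p i) < lin a (nth x0 p j).
Proof.
move/mono_sorted => S ij js.
by apply: (sorted_ltn_nth lin_lt_trans) => //; rewrite inE (ltn_trans ij).
Qed.

Lemma mono_consec p j x0 : monotone_path n a p -> (j.+1 < size p)%N ->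
  mono_step a (nth x0 p j) (nth x0 p j.+1).
Proof. by case=> rest [-> [_ [_ /(pathP x0) P]]] /P. Qed.

Lemma mono_ends p : monotone_path n a p -> ((false, n) \in p) && ((true, n) \in p).
Proof. by case=> rest [-> [L _]]; rewrite mem_head -L mem_last. Qed.

Lemma lin_anti u w : antipodal u w -> lin a u = - lin a w.
Proof.
case: u w => [b i] [c j] /andP[/= /eqP <- ne].
by case: b c ne => [] [] //= _; rewrite opprK.
Qed.

Definition visits_pair (p : seq vert) (i : nat) : bool :=
  ((false, i) \in p) && ((true, i) \in p).

(* A monotone path never visits both e_1 and -e_1: the vertex following -e_1
   would have |phi| < a_1. *)
Lemma no_pair_at_one p : monotone_path n a p -> ~~ visits_pair p 1.
Proof.
move=> M; apply/andP => -[fp tp].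
set x0 : vert := (false, 0%N).
set k := index (false, 1%N) p; set t := index (true, 1%N) p.
have kS : (k < size p)%N by rewrite index_mem.
have tS : (t < size p)%N by rewrite index_mem.
have nk : nth x0 p k = (false, 1%N) by rewrite nth_index.
have nt : nth x0 p t = (true, 1%N) by rewrite nth_index.
have kt : (k < t)%N.
  case: (ltngtP k t) => [//|tk|tk]; last by move: nt; rewrite -tk nk.
  have := mono_nth_lt x0 M tk kS; rewrite nk nt /lin /= => h.
  by exfalso; have := a1_gt0; lra.
set w := nth x0 p k.+1.
have /andP[nanti gt] := mono_consec x0 M (leq_ltn_trans kt tS).
rewrite nk -/w in nanti gt.
have lt : lin a w < a 1%N.
  move: kt; rewrite leq_eqVlt => /orP[/eqP kt|kt].
    by move: nanti; rewrite /w kt nt /antipodal eqxx.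
  by have := mono_nth_lt x0 M kt tS; rewrite nt.
have small : `|lin a w| < a 1%N by rewrite ltr_norml lt andbT; exact: gt.
have /andP[+ _] := lin_norm_bounds (allP (mono_valid M) w (mem_nth _ (leq_ltn_trans kt tS))).
by rewrite leNgt small.
Qed.

(* Deleting -e_i (i < n) from a monotone path that also visits e_i leaves a
   monotone path: the vertex after -e_i has phi-value at most a_i, so it is
   not the antipode of the vertex before -e_i. *)
Lemma delete_neg_mono p i : monotone_path n a p -> (1 <= i < n)%N ->
  visits_pair p i -> monotone_path n a (rem (false, i) p).
Proof.
move=> M iN /andP[fp tp].
have ai : 0 < a i by apply: coef_gt0; lia.
have PW := mono_pairwise M.
case: M => rest [Ep [L [V P]]].
have ni : ((false, n) == (false, i)) = false by apply/eqP => -[e]; lia.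
have fr : (false, i) \in rest by move: fp; rewrite Ep in_cons eq_sym ni.
have [s1 [s2 [Er ns1]]] := split_first fr.
rewrite Er in P L; rewrite Ep Er -cat_cons in PW tp V.
have ts2 : (true, i) \in s2.
  move: tp PW; rewrite mem_cat pairwise_cat => /orP[t1|].
    move=> /and3P[/allrelP/(_ _ _ t1 (mem_head _ _))]; rewrite /lin_lt /lin /=.
    by move=> h; exfalso; lra.
  by rewrite inE.
clear tp; case: s2 Er ts2 PW P L V => [//|w s2] Er ts2 PW P L V.
have lw : lin a w <= a i.
  move: ts2; rewrite inE => /orP[/eqP <- //|ts2].
  move: PW; rewrite pairwise_cat /= => /and3P[_ _ /andP[_ /andP[/allP/(_ _ ts2) + _]]].
  exact: ltW.
rewrite Ep /= ni Er rem_split //.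
exists (s1 ++ w :: s2); do !split => //; first by rewrite -L !last_cat.
  by move: V; rewrite /= !all_cat /= => /and3P[-> -> /and3P[_ -> ->]].
move: (P); rewrite cat_path /= => /and3P[_ /andP[_ uf] /andP[/andP[_ fw] _]].
apply: path_drop P _; rewrite /mono_step (lt_trans uf fw) andbT; apply/negP => /lin_anti eu.
have negi : lin a (false, i) = - a i by [].
by move: uf; rewrite eu negi => h; lra.
Qed.

Lemma remove_pairs (L : seq nat) p : monotone_path n a p ->
  {in L, forall i, (1 <= i < n)%N} ->
  exists q, [/\ monotone_path n a q, flip_within n a (size L) p q,
    {in L, forall i, ~~ visits_pair q i} &
    forall j, visits_pair q j -> visits_pair p j].
Proof.
elim: L p => [|i L IH] p M HL; first by exists p.
have HL' : {in L, forall j, (1 <= j < n)%N}.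
  by move=> j jL; apply: HL; rewrite inE jL orbT.
have Hi : (1 <= i < n)%N by apply: HL; rewrite mem_head.
case Bi: (visits_pair p i); last first.
  have [q [Mq Fq Nq Sq]] := IH _ M HL'.
  exists q; split => //; first by left.
  move=> j; rewrite inE => /orP[/eqP ->|]; last exact: Nq.
  by apply/negP => /Sq; rewrite Bi.
have Mr := delete_neg_mono M Hi Bi.
have [q [Mq Fq Nq Sq]] := IH _ Mr HL'.
have sub_rem : forall j, visits_pair (rem (false, i) p) j -> visits_pair p j.
  by move=> j /andP[/mem_rem f /mem_rem t]; apply/andP.
exists q; split => //.
- by right; exists (rem (false, i) p); split => //; split => //; apply/flip_rem/(andP Bi).1.
- move=> j; rewrite inE => /orP[/eqP ->|]; last exact: Nq.
  by apply/negP => /Sq /andP[]; rewrite mem_rem_uniqF // (mono_uniq M).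
- by move=> j /Sq /sub_rem.
Qed.

Lemma step_not_diameter v w : valid n v -> valid n w -> mono_step a v w ->
  - a n < lin a v \/ lin a w < a n.
Proof.
move=> vv vw /andP[nanti lvw].
have /andP[_ bv] := lin_norm_bounds vv; have /andP[_ bw] := lin_norm_bounds vw.
move: bv bw; rewrite !ler_norml => /andP[bv _] /andP[_ bw].
have [ev|nv] := eqVneq (lin a v) (- a n); last by left; rewrite lt_neqAle eq_sym nv.
have [ew|nw] := eqVneq (lin a w) (a n); last by right; rewrite lt_neqAle nw.
have top : forall u, valid n u -> `|lin a u| = a n -> u.2 = n.
  move=> u vu eu; apply/eqP/negPn/negP => ne.
  by have := lin_lt_top vu ne; rewrite eu ltxx.
have an : 0 < a n by apply: coef_gt0; move: vv; rewrite /valid; lia.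
have v2 : v.2 = n by apply: top; rewrite // ev normrN gtr0_norm.
have w2 : w.2 = n by apply: top; rewrite // ew gtr0_norm.
exfalso; move/negP: nanti; apply; rewrite /antipodal v2 w2 eqxx /=.
apply/negP => /eqP e1.
by move: lvw; rewrite /lin e1 v2 w2 ltxx.

Qed.

Lemma mono_neighbours q j x0 u : monotone_path n a q -> (j.+1 < size q)%N ->
  u \in q -> u != nth x0 q j -> u != nth x0 q j.+1 ->
  lin a u < lin a (nth x0 q j) \/ lin a (nth x0 q j.+1) < lin a u.
Proof.
move=> M js uq nv nw; set k := index u q.
have ks : (k < size q)%N by rewrite index_mem.
have uk : nth x0 q k = u by rewrite nth_index.
have [kj|jk] := ltnP k j; first by left; rewrite -uk mono_nth_lt // ltnW.
have kj : k != j by apply: contra nv => /eqP kj; rewrite -uk kj.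
have kj1 : k != j.+1 by apply: contra nw => /eqP kj1; rewrite -uk kj1.
by right; rewrite -uk mono_nth_lt //; lia.
Qed.

Definition face_value (psi : nat -> R) (c : R) (u : vert) : R :=
  lin psi u + c * lin a u.

Lemma lower_edge_of_strict psi c v w :
  face_value psi c v = face_value psi c w ->
  (forall u, valid n u -> u != v -> u != w -> face_value psi c v < face_value psi c u) ->
  lower_edge_preimage n a psi c v w.
Proof.
move=> fvw strict; split=> [|u vu]; first exact: fvw.
change (face_value psi c v <= face_value psi c u /\
  (face_value psi c u <= face_value psi c v -> u = v \/ u = w)).
have [->|nv] := eqVneq u v; first by split=> //; left.
have [->|nw] := eqVneq u w; first by rewrite fvw; split=> //; right.
have lt := strict u vu nv nw.
by split; [exact: ltW | rewrite leNgt lt].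
Qed.

(* The height function lifting a path with no antipodal pair below e_n onto
   the parabola: psi(+-e_i) = +-(a_i^2 - a_n^2) when +-e_i lies on q. *)
Definition parabola_lift (q : seq vert) (i : nat) : R :=
  if (true, i) \in q then a i ^+ 2 - a n ^+ 2
  else if (false, i) \in q then a n ^+ 2 - a i ^+ 2 else 0.

Lemma parabola_lift_on_path q u : monotone_path n a q ->
  (forall i, (1 <= i < n)%N -> ~~ visits_pair q i) ->
  u \in q -> lin (parabola_lift q) u = lin a u ^+ 2 - a n ^+ 2.
Proof.
move=> M NP; case: u => [[] i] uq; rewrite /lin /parabola_lift /=; first by rewrite uq.
case: ifP => tq; last by rewrite uq opprB sqrrN.
have /andP[/= i1 iN] : valid n (false, i) by apply: (allP (mono_valid M)).
have -> : i = n.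
  apply/eqP; rewrite eqn_leq iN leqNgt; apply/negP => lt.
  by move: (NP i); rewrite /visits_pair uq tq i1 lt => /(_ isT).
by rewrite sqrrN !subrr oppr0.
Qed.

Lemma parabola_lift_off_path q u : monotone_path n a q -> valid n u ->
  u \notin q -> 0 <= lin (parabola_lift q) u /\ `|lin a u| < a n.
Proof.
move=> M vu uq.
have un : u.2 != n.
  apply: contra uq => /eqP un; have /andP[fn tn] := mono_ends M.
  by case: u un {vu} => [[] i] /= ->.
split; last exact: lin_lt_top.
case: u vu uq un => [b i] /andP[/= i1 iN] uq un.
have ai : 0 < a i by apply: coef_gt0; lia.
have lt : a i < a n by apply: coef_lt; lia.
have sq : a i ^+ 2 <= a n ^+ 2 by rewrite ler_sqr ?nnegrE ?ltW // (lt_trans ai lt).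
case: b uq => uq; rewrite /lin /parabola_lift /=.
  by rewrite (negbTE uq); case: ifP => _; rewrite ?subr_ge0.
by case: ifP => _; rewrite ?opprB ?subr_ge0 // (negbTE uq) oppr0.
Qed.

(* With the parabola lift, the functional psi - (x_v + x_w) phi
   takes, relative to its value at v, the value (x_u - x_v)(x_u - x_w) at a
   vertex u of the path (x = phi) and a strictly positive value off the path;
   so the edge [v, w] is exactly the minimising face. *)
Lemma coherent_of_no_pairs q : monotone_path n a q ->
  (forall i, (1 <= i < n)%N -> ~~ visits_pair q i) -> coherent n a q.
Proof.
move=> M NP; exists (parabola_lift q) => j js.
set x0 : vert := (false, 0%N); set v := nth x0 q j; set w := nth x0 q j.+1.
have vq : v \in q by rewrite mem_nth // ltnW.
have wq : w \in q by rewrite mem_nth.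
have lvw : lin a v < lin a w by apply: mono_nth_lt.
pose f := face_value (parabola_lift q) (- (lin a v + lin a w)).
have on_path u : u \in q -> f u - f v = (lin a u - lin a v) * (lin a u - lin a w).
  by move=> uq; rewrite /f /face_value !parabola_lift_on_path //; ring.
exists (- (lin a v + lin a w)); apply: lower_edge_of_strict.
  by apply/eqP; rewrite eq_sym -subr_eq0 on_path // subrr mulr0.
move=> u vu nv nw; rewrite -subr_gt0 -/f.
case uq: (u \in q).
  rewrite on_path //; case: (mono_neighbours M js uq nv nw) => h.
    by rewrite nmulr_rgt0 ?subr_lt0 // (lt_trans h lvw).
  by rewrite mulr_gt0 // subr_gt0 // (lt_trans lvw h).
have [lift_ge0 inside] := parabola_lift_off_path M vu (negbT uq).
have V := allP (mono_valid M).
have /andP[_ bv] := lin_norm_bounds (V v vq); have /andP[_ bw] := lin_norm_bounds (V w wq).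
move: bv bw inside; rewrite !ler_norml ltr_norml => /andP[bv _] /andP[_ bw] inside.
have gap := quadratic_gap_pos bv lvw bw inside
  (step_not_diameter (V v vq) (V w wq) (mono_consec x0 M js)).
have -> : f u - f v = lin (parabola_lift q) u +
    (a n ^+ 2 + lin a v * lin a w - (lin a v + lin a w) * lin a u).
  by rewrite /f /face_value (parabola_lift_on_path M NP vq); ring.
exact: ltr_wpDl.
Qed.


Lemma vertex_minimises q psi z : monotone_path n a q ->
  (forall j, (j.+1 < size q)%N -> exists c : R,
     lower_edge_preimage n a psi c (nth (false, 0%N) q j) (nth (false, 0%N) q j.+1)) ->
  z \in q -> exists c v w,
    (forall u, valid n u -> face_value psi c z <= face_value psi c u) /\
    (forall u, valid n u -> face_value psi c u <= face_value psi c z -> u = v \/ u = w).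
Proof.
move=> M edges zq.
have size2 : (1 < size q)%N by case: M => -[|? ?] [-> [L _]] //.
have [j js zvw] := mem_consecutive (false, 0%N) size2 zq.
have [c [fvw face]] := edges j js.
set v := nth _ q j in zvw fvw face; set w := nth _ q j.+1 in zvw fvw face.
have fz : face_value psi c z = face_value psi c v by case: zvw => ->.
by exists c, v, w; rewrite fz; split=> u /face [].
Qed.

(* If -e_i and e_i (i < n) minimise psi + c phi and psi + c' phi, comparing
   with e_n and -e_n forces c = c' and makes the four vertices +-e_i, +-e_n
   minimisers of the same functional, while at most two vertices are. *)
Lemma coherent_no_pairs q i : monotone_path n a q -> coherent n a q ->
  (1 <= i < n)%N -> ~~ visits_pair q i.
Proof.
move=> M [psi edges] iN; apply/andP => -[fq tq].
have ai : 0 < a i by apply: coef_gt0; lia.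
have ain : a i < a n by apply: coef_lt; lia.
have vfi : valid n (false, i) by rewrite /valid /=; lia.
have vti : valid n (true, i) by rewrite /valid /=; lia.
have vfn : valid n (false, n) by rewrite /valid /=; lia.
have vtn : valid n (true, n) by rewrite /valid /=; lia.
have [c [v [w [minF face]]]] := vertex_minimises M edges fq.
have [c' [_ [_ [minT _]]]] := vertex_minimises M edges tq.
have := minF _ vtn; have := minF _ vfn; have := minT _ vtn; have := minT _ vfn.
rewrite /face_value /lin /= => h1 h2 h3 h4.
have d1 : (c' - c) * (a i + a n) <= 0 by lra.
have d2 : 0 <= (c' - c) * (a n - a i) by lra.
have e1 : c' - c <= 0 by move: d1; rewrite pmulr_lle0 //; lra.
have e2 : 0 <= c' - c by move: d2; rewrite pmulr_lge0 //; lra.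
have cc : c' = c by lra.
subst c'.
have minimiser u : valid n u ->
    face_value psi c u = face_value psi c (false, i) -> u = v \/ u = w.
  by move=> vu e; apply: face => //; rewrite e.
have m0 := minimiser _ vfi erefl.
have m1 : (true, i) = v \/ (true, i) = w by apply: minimiser; rewrite // /face_value /lin /=; lra.
have m2 : (true, n) = v \/ (true, n) = w by apply: minimiser; rewrite // /face_value /lin /=; lra.
have m3 : (false, n) = v \/ (false, n) = w by apply: minimiser; rewrite // /face_value /lin /=; lra.
have ni : i <> n by move=> e; move: iN; rewrite e ltnn andbF.
by case: m0 m1 m2 m3 => <- [] f1 [] f2 [] f3; congruence.
Qed.

Definition pair_count (p : seq vert) : nat := count (visits_pair p) (iota 2 (n - 2)).

(* A flip changes the potential by at most one: inserting a vertex creates at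
   most the pair of its own index. *)
Lemma pair_count_flip p r : flip_adj p r -> (pair_count p <= (pair_count r).+1)%N.
Proof.
case=> s1 [s2 [x [[-> ->]|[-> ->]]]].
  apply: leq_trans (leqnSn _); apply: sub_count => i.
  by rewrite /visits_pair !mem_cat !inE => /andP[/orP[->|->] /orP[->|->]]; rewrite ?orbT.
have sub : subpred (visits_pair (s1 ++ x :: s2)) (predU (visits_pair (s1 ++ s2)) (pred1 x.2)).
  move=> i; rewrite /visits_pair /= !mem_cat !inE.
  have [->|ne] := eqVneq i x.2; first by rewrite orbT.
  have [n1 n2] : ((false, i) == x) = false /\ ((true, i) == x) = false.
    by split; apply/negbTE; apply: contra ne => /eqP <-.
  by rewrite n1 n2 /= orbF.
rewrite /pair_count; apply: leq_trans (sub_count sub _) _.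
have := count_predUI (visits_pair (s1 ++ s2)) (pred1 x.2) (iota 2 (n - 2)).
have : (count (pred1 x.2) (iota 2 (n - 2)) <= 1)%N.
  by rewrite (count_uniq_mem _ (iota_uniq 2 (n - 2))) leq_b1.
by move: (count _ _) (count _ _) (count _ _) (count _ _) => c1 c2 c3 c4; lia.
Qed.

Lemma pair_count_within k p q : flip_within n a k p q ->
  (pair_count p <= pair_count q + k)%N.
Proof.
elim: k p => [|k IH] p /=; first by move=> ->; rewrite addn0.
case=> [/IH|[r [_ [/pair_count_flip F /IH]]]]; lia.
Qed.

Lemma extremal_mono : (2 <= n)%N -> monotone_path n a (extremal_path n).
Proof.
rewrite /extremal_path; case: n a_incr => [//|m] incr m2.
rewrite /= subn0 subn1 /=.
set L1 := [seq (false, (m.+1 - i)%N) | i <- iota 1 m].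
set L2 := [seq (true, i) | i <- iota 2 m].
have [k mk] : exists k, m = k.+1 by exists m.-1; lia.
have a12 : a 1%N < a 2 by apply: incr; lia.
exists (L1 ++ L2); split => //; split; first by rewrite last_cat /L2 mk last_map_iota.
split.
  rewrite /= all_cat; apply/and3P; split; first by rewrite /valid /=; lia.
    by apply/allP => v /mapP [i]; rewrite mem_iota => Hi ->; rewrite /valid /=; lia.
  by apply/allP => v /mapP [i]; rewrite mem_iota => Hi ->; rewrite /valid /=; lia.
have last1 : last (false, m.+1) L1 = (false, 1%N).
  by rewrite /L1 mk last_map_iota; congr (_, _); lia.
rewrite cat_path last1; apply/andP; split; apply: path_map_iota.
- by move=> _; rewrite /mono_step /antipodal /= andbF /lin /= subn1 ltrN2 incr //; lia.
- move=> i i1 im; rewrite /mono_step /antipodal /= andbF /lin /= ltrN2.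
  have -> : (m.+1 - i = (m - i).+1)%N by lia.
  by apply: incr; lia.
- move=> _; rewrite /mono_step /antipodal /= /lin /=.
  by have := a1_gt0; lra.
- by move=> i i2 im; rewrite /mono_step /antipodal /= andbF /lin /= incr //; lia.
Qed.

Lemma extremal_pair_count : pair_count (extremal_path n) = (n - 2)%N.
Proof.
rewrite /pair_count (eq_in_count (a2 := predT)) ?count_predT ?size_iota //.
move=> i; rewrite mem_iota => Hi /=; apply/andP; split; rewrite /extremal_path mem_cat.
  apply/orP; left; apply/mapP; exists (n - i)%N; first by rewrite mem_iota; lia.
  congr (_, _); lia.
by apply/orP; right; apply/mapP; exists i => //; rewrite mem_iota; lia.
Qed.

Lemma coherent_pair_count q : monotone_path n a q -> coherent n a q ->
  pair_count q = 0%N.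
Proof.
move=> M C; rewrite /pair_count (eq_in_count (a2 := pred0)) ?count_pred0 // => i.
by rewrite mem_iota => Hi; apply/negbTE/coherent_no_pairs => //; lia.
Qed.

(* Upper bound: removing -e_i for each pair i = 2, ..., n-1 reaches a path
   whose only antipodal pair is {-e_n, e_n}, hence a coherent one. *)
Lemma coherent_within p : monotone_path n a p ->
  exists q, [/\ monotone_path n a q, coherent n a q & flip_within n a (n - 2) p q].
Proof.
move=> M.
have idx : {in iota 2 (n - 2), forall i, (1 <= i < n)%N}.
  by move=> i; rewrite mem_iota; lia.
have [q [Mq Fq NPq _]] := remove_pairs M idx.
exists q; split=> //; last by rewrite size_iota in Fq.
apply: coherent_of_no_pairs => // i iN.
have [->|i2] : i = 1%N \/ (2 <= i)%N by lia.
  exact: no_pair_at_one.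
by apply: NPq; rewrite mem_iota; lia.
Qed.

(* Lower bound: every flip lowers the potential by at most one, and the
   potential drops from n - 2 on the extremal path to 0 on coherent paths. *)
Lemma extremal_far_from_coherent q k : monotone_path n a q -> coherent n a q ->
  flip_within n a k (extremal_path n) q -> (n - 2 <= k)%N.
Proof.
move=> M C /pair_count_within.
by rewrite extremal_pair_count coherent_pair_count.
Qed.

End CrossPolytope.

Theorem theorem1p1 (R : realType) (n : nat) (a : nat -> R) :
  (3 <= n)%N -> 0 < a 1%N -> (forall i, (1 <= i < n)%N -> a i < a i.+1) ->
  (forall p, monotone_path n a p ->
     exists q, monotone_path n a q /\ coherent n a q /\ flip_within n a (n - 2) p q) /\
  (monotone_path n a (extremal_path n) /\
   forall q k, monotone_path n a q -> coherent n a q ->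
     flip_within n a k (extremal_path n) q -> (n - 2 <= k)%N).
Proof.
move=> n3 a1 incr; split.
  by move=> p /(coherent_within a1 incr) [q [Mq Cq Fq]]; exists q.
split; first exact: extremal_mono a1 incr (ltnW n3).
exact: extremal_far_from_coherent a1 incr.
Qed.
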